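(* Let $\mathcal A$ be a category of cubes. For any $q\geq0$, the canonical map $\mathcal{A}[q]\to\mathrm{cosk}^\mathcal{A}_1(\mathcal{A}[q]_{\leq1})$ induced by the isomorphism $\mathcal{A}[q]_{\leq 1}\cong\mathcal{A}[q]_{\leq1}$ is an inclusion of presheaves. For $q=0$ or $q=1$ this inclusion is an equality, for any category of cubes $\mathcal{A}$.
   Context: $[0]=\{()\}$, $[n]=\{0,1\}^n$ ($n\ge1$) with the product order; ${\rm PoSet}$: posets with strictly increasing maps. Face maps $\delta_i^\alpha:[n-1]\to[n]$ insert $\alpha$ at position $i$; $\square$ is the subcategory of ${\rm PoSet}$ with objects $[n]$ generated by face maps. A map is adjacency-preserving if strictly increasing and it sends pairs at Hamming distance $1$ to pairs at Hamming distance $1$. A category of cubes is a subcategory $\mathcal A\subset{\rm PoSet}$ with objects $\{[n]:n\ge0\}$, containing $\square$, with all morphisms adjacency-preserving. $\mathcal A$-sets are presheaves on $\mathcal A$; $\mathcal A[q]=\mathcal A(-,[q])$; $K_{\le1}$ denotes restriction of $K$ to the full subcategory on $[0],[1]$; $\mathrm{cosk}_1^{\mathcal A}$ is the right adjoint of this truncation functor, and the canonical map $K\to\mathrm{cosk}_1^{\mathcal A}(K_{\le1})$ is the unit of the adjunction. *)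

From Stdlib Require Import ProofIrrelevance.
From HB Require Import structures.
From mathcomp Require Import all_boot.

Set Implicit Arguments.
Unset Strict Implicit.
Unset Printing Implicit Defensive.

(* [n] = {0,1}^n, as boolean finite functions on 'I_n; [0] has one element *)
Notation cube n := {ffun 'I_n -> bool}.

Definition cle n (x y : cube n) : bool := [forall i, x i <= y i].
Definition clt n (x y : cube n) : bool := (x != y) && cle x y.

Definition hdist n (x y : cube n) : nat := #|[set i | x i != y i]|.

Definition strictly_increasing m n (f : cube m -> cube n) : Prop :=
  forall x y, clt x y -> clt (f x) (f y).

Definition adjacency_preserving m n (f : cube m -> cube n) : Prop :=
  strictly_increasing f /\ (forall x y, hdist x y = 1 -> hdist (f x) (f y) = 1).

(* face map delta_i^a : [n] -> [n+1], inserting a at position i (0-based) *)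
Definition face n (i : 'I_n.+1) (a : bool) : {ffun cube n -> cube n.+1} :=
  [ffun x : cube n => [ffun j : 'I_n.+1 =>
     match unlift i j with None => a | Some j' => x j' end]].

Definition fid n : {ffun cube n -> cube n} := [ffun x => x].
Definition fcomp m n p (g : {ffun cube n -> cube p}) (f : {ffun cube m -> cube n})
  : {ffun cube m -> cube p} := [ffun x => g (f x)].

(* A category of cubes: a subcategory of PoSet on the objects [n], containing
   the identities and all face maps (hence the cube category generated by the
   faces), closed under composition, all of whose maps are adjacency-preserving
   (in particular strictly increasing). *)
Record cubecat := CubeCat {
  hom : forall m n, {ffun cube m -> cube n} -> Prop;
  hom_id : forall n, hom (fid n);
  hom_comp : forall m n p (g : {ffun cube n -> cube p}) (f : {ffun cube m -> cube n}),
      hom g -> hom f -> hom (fcomp g f);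
  hom_face : forall n (i : 'I_n.+1) (a : bool), hom (face i a);
  hom_adj : forall m n (f : {ffun cube m -> cube n}), hom f ->
      adjacency_preserving (fun x => f x)
}.

Definition Hom (A : cubecat) (m n : nat) := {f : {ffun cube m -> cube n} | hom A f}.

Definition idH (A : cubecat) n : Hom A n n := exist _ (fid n) (hom_id A n).
Definition compH (A : cubecat) m n p (g : Hom A n p) (f : Hom A m n) : Hom A m p :=
  exist _ (fcomp (proj1_sig g) (proj1_sig f)) (hom_comp (proj2_sig g) (proj2_sig f)).

Lemma Hom_eq (A : cubecat) m n (f g : Hom A m n) : proj1_sig f = proj1_sig g -> f = g.
Proof.
case: f g => [f hf] [g hg] /= E; subst g; congr exist; apply: proof_irrelevance.
Qed.

Record presheaf (A : cubecat) := Presheaf {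
  ps_obj :> nat -> Type;
  ps_act : forall m n, Hom A m n -> ps_obj n -> ps_obj m;
  ps_id : forall n (x : ps_obj n), ps_act (idH A n) x = x;
  ps_comp : forall m n p (f : Hom A m n) (g : Hom A n p) (x : ps_obj p),
      ps_act (compH g f) x = ps_act f (ps_act g x)
}.

Lemma rep_id (A : cubecat) q n (x : Hom A n q) : compH x (idH A n) = x.
Proof. by apply: Hom_eq; apply/ffunP => y; rewrite /= !ffunE. Qed.

Lemma rep_comp (A : cubecat) q m n p (f : Hom A m n) (g : Hom A n p) (x : Hom A p q) :
  compH x (compH g f) = compH (compH x g) f.
Proof. by apply: Hom_eq; apply/ffunP => y; rewrite /= !ffunE. Qed.

Definition representable (A : cubecat) (q : nat) : presheaf A :=
  @Presheaf A (fun n => Hom A n q) (fun m n f x => compH x f)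
    (@rep_id A q) (fun m n p f g x => @rep_comp A q m n p f g x).

(* presheaves on the full subcategory A_{<=1} on [0],[1] *)
Record tpresheaf (A : cubecat) := TPresheaf {
  tp_obj : 'I_2 -> Type;
  tp_act : forall k l : 'I_2, Hom A k l -> tp_obj l -> tp_obj k;
  tp_id : forall (k : 'I_2) (x : tp_obj k), tp_act (idH A k) x = x;
  tp_comp : forall (k l r : 'I_2) (f : Hom A k l) (g : Hom A l r) (x : tp_obj r),
      tp_act (compH g f) x = tp_act f (tp_act g x)
}.

Definition trunc (A : cubecat) (K : presheaf A) : tpresheaf A :=
  @TPresheaf A (fun k => K k) (fun k l f x => ps_act f x)
    (fun k x => ps_id x) (fun k l r f g x => ps_comp f g x).

(* cosk_1^A T evaluated at [n], via the (right Kan extension) formula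
   cosk_1(T)_n = Nat(A[n]_{<=1}, T): natural families of maps A([k],[n]) -> T_k. *)
Record cosk1 (A : cubecat) (T : tpresheaf A) (n : nat) := Cosk1 {
  ce_map : forall k : 'I_2, Hom A k n -> tp_obj T k;
  ce_nat : forall (k l : 'I_2) (u : Hom A k l) (g : Hom A l n),
      ce_map (compH g u) = tp_act u (ce_map g)
}.

Definition cosk1_unit (A : cubecat) (K : presheaf A) (n : nat) (x : K n)
  : cosk1 (trunc K) n :=
  @Cosk1 A (trunc K) n (fun k g => ps_act g x)
    (fun k l u g => ps_comp u g x).

(* A morphism into [q] is determined by its values on the vertices of its
   source, and vertices are the points [0] -> [n] of A; this gives injectivity.
   In degrees 0 and 1 the unit is a bijection for every presheaf (Yoneda).  In
   degrees n >= 2 both sides are empty when q <= 1: a 1-coskeletal element would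
   send an edge of [n] to a map [1] -> [0], which cannot be strictly increasing,
   or, for q = 1, the two consecutive edges (0,0,w) -> (1,0,w) -> (1,1,w) to two
   maps [1] -> [1], which both fix the endpoints, so the shared vertex would be
   sent both to 1 and to 0. *)
From Stdlib Require Import ProofIrrelevance FunctionalExtensionality.
From mathcomp Require Import all_boot.

Set Implicit Arguments.
Unset Strict Implicit.
Unset Printing Implicit Defensive.

Lemma cube0_eq (x y : cube 0) : x = y.
Proof. by apply/ffunP => -[]. Qed.

Lemma cube1_eq (x y : cube 1) : x ord0 = y ord0 -> x = y.
Proof. by move=> e; apply/ffunP => j; rewrite (ord1 j). Qed.

Lemma face_ord0 n a (x : cube n) : face ord0 a x ord0 = a.
Proof. by rewrite !ffunE unlift_none. Qed.

Definition ctail n (x : cube n.+1) : cube n := [ffun j => x (lift ord0 j)].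

Lemma face_ctail n (p : cube n.+1) : face ord0 (p ord0) (ctail p) = p.
Proof.
apply/ffunP => j; rewrite !ffunE.
by case: (unliftP ord0 j) => [j'|] ->; rewrite ?ffunE.
Qed.

Lemma clt_cube0 (x y : cube 0) : ~~ clt x y.
Proof. by rewrite /clt (cube0_eq x y) eqxx. Qed.

Lemma clt_cube1 (x y : cube 1) : clt x y -> x ord0 = false /\ y ord0 = true.
Proof.
case/andP => ne /forallP /(_ ord0).
have : x ord0 != y ord0 by apply: contra ne => /eqP /cube1_eq ->.
by case: (x ord0); case: (y ord0).
Qed.

Section CubeCategory.
Variable A : cubecat.

Lemma compidH m n (f : Hom A m n) : compH (idH A n) f = f.
Proof. by apply: Hom_eq; apply/ffunP => x; rewrite !ffunE. Qed.

Lemma Hom_strict m n (f : Hom A m n) x y :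
  clt x y -> clt (proj1_sig f x) (proj1_sig f y).
Proof. by have [incr _] := hom_adj (proj2_sig f); apply: incr. Qed.

Lemma line_hom n (x : cube n) :
  exists E : Hom A 1 n.+1, forall y, proj1_sig E y = face ord0 (y ord0) x.
Proof.
elim: n x => [|n IH] x.
  by exists (idH A 1) => y; rewrite ffunE (cube0_eq x (ctail y)) face_ctail.
have [E HE] := IH (ctail x).
pose i1 : 'I_n.+2 := lift ord0 ord0.
exists (compH (exist _ (face i1 (x ord0)) (hom_face A i1 (x ord0))) E) => y /=.
rewrite ffunE HE; apply/ffunP => j; rewrite !ffunE.
case: (unliftP ord0 j) => [j'|] ->; last first.
  have -> : ord0 = lift i1 ord0 :> 'I_n.+2 by apply/val_inj.
  by rewrite liftK ffunE unlift_none.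
case: (unliftP ord0 j') => [j''|] ->; last by rewrite unlift_none.
have -> : lift ord0 (lift ord0 j'') = lift i1 (lift ord0 j'') by apply/val_inj.
by rewrite !(liftK, ffunE).
Qed.

Lemma vertex_hom n (p : cube n) : exists P : Hom A 0 n, forall t, proj1_sig P t = p.
Proof.
case: n p => [|n] p.
  by exists (idH A 0) => t; apply: cube0_eq.
have [E HE] := line_hom (ctail p).
exists (compH E (exist _ (face ord0 (p ord0)) (hom_face A ord0 (p ord0)))) => t /=.
by rewrite ffunE HE face_ord0 face_ctail.
Qed.

Lemma Hom_eq_on_vertices n q (f g : Hom A n q) :
  (forall P : Hom A 0 n, compH f P = compH g P) -> f = g.
Proof.
move=> fg; apply: Hom_eq; apply/ffunP => p.
have [P HP] := vertex_hom p; pose t : cube 0 := [ffun=> false].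
have := congr1 (fun h : Hom A 0 q => proj1_sig h t) (fg P).
by rewrite /= !ffunE HP.
Qed.

Definition endpoint (a : bool) : Hom A 0 1 := exist _ (face ord0 a) (hom_face A ord0 a).

Lemma endpoint_lt t : clt (proj1_sig (endpoint false) t) (proj1_sig (endpoint true) t).
Proof.
apply/andP; split; first by apply/eqP => /ffunP /(_ ord0); rewrite !face_ord0.
by apply/forallP => j; rewrite (ord1 j) !face_ord0.
Qed.

Lemma endpoint_inj : injective endpoint.
Proof.
move=> a b /(congr1 (fun h : Hom A 0 1 => proj1_sig h [ffun=> false] ord0)).
by rewrite /= !face_ord0.
Qed.

Lemma Hom10_empty (f : Hom A 1 0) : False.
Proof.
have := Hom_strict f (endpoint_lt [ffun=> false]).
by rewrite (negbTE (clt_cube0 _ _)).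
Qed.

Lemma Hom11_endpoint (f : Hom A 1 1) a : compH f (endpoint a) = endpoint a.
Proof.
apply: Hom_eq; apply/ffunP => t; rewrite ffunE; apply: cube1_eq.
have [f0 f1] := clt_cube1 (Hom_strict f (endpoint_lt t)).
by rewrite face_ord0; case: a; rewrite ?f0 ?f1.
Qed.

Lemma path2_hom n :
  exists G1 G2 : Hom A 1 n.+2, compH G1 (endpoint true) = compH G2 (endpoint false).
Proof.
have [W HW] := vertex_hom ([ffun=> false] : cube n).
pose w := proj1_sig W [ffun=> false].
have [G1 HG1] := line_hom (face ord0 false w).
have [E HE] := line_hom w.
exists G1, (compH (exist _ (face ord0 true) (hom_face A ord0 true)) E).
apply: Hom_eq; apply/ffunP => t /=.
by rewrite [LHS]ffunE HG1 [RHS]ffunE [RHS]ffunE HE !face_ord0.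
Qed.

Lemma cosk1_ext (T : tpresheaf A) n (c1 c2 : cosk1 T n) :
  (forall k g, ce_map c1 (k:=k) g = ce_map c2 (k:=k) g) -> c1 = c2.
Proof.
case: c1 c2 => [m1 h1] [m2 h2] /= E.
have E' : m1 = m2.
  by apply: functional_extensionality_dep => k; apply: functional_extensionality_dep.
by subst m2; congr Cosk1; apply: proof_irrelevance.
Qed.

Lemma cosk1_unit_bij (K : presheaf A) (k : 'I_2) : bijective (@cosk1_unit A K k).
Proof.
exists (fun c : cosk1 (trunc K) k => ce_map c (k:=k) (idH A k)).
  by move=> x; apply: ps_id.
move=> c; apply: cosk1_ext => l h /=.
by have := ce_nat c h (idH A k); rewrite compidH => ->.
Qed.

Lemma cosk1_rep_empty q n :
  q <= 1 -> cosk1 (trunc (representable A q)) n.+2 -> False.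
Proof.
case: q => [|[|//]] _ c.
  have [E _] := line_hom ([ffun=> false] : cube n.+1).
  exact: (Hom10_empty (ce_map c (k:=ord_max) E)).
have [G1 [G2 G12]] := path2_hom n.
have := ce_nat c (k:=ord0) (l:=ord_max) (endpoint true) G1.
rewrite G12 (ce_nat c (k:=ord0) (l:=ord_max)) /= !Hom11_endpoint.
by move/endpoint_inj.
Qed.

End CubeCategory.

Theorem proposition7p2 (A : cubecat) (q : nat) :
  (forall n : nat, injective (@cosk1_unit A (representable A q) n)) /\
  (q <= 1 -> forall n : nat, bijective (@cosk1_unit A (representable A q) n)).
Proof.
split.
  move=> n x y /(congr1 (fun c => ce_map c (k:=ord0))) E.
  by apply: Hom_eq_on_vertices => P; apply: (congr1 (fun h => h P) E).
move=> hq [|[|n]].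
- exact: (cosk1_unit_bij _ ord0).
- exact: (cosk1_unit_bij _ ord_max).
exists (fun c => False_rect _ (cosk1_rep_empty hq c)) => [x|c].
  by case: (cosk1_rep_empty hq (cosk1_unit x)).
by case: (cosk1_rep_empty hq c).
Qed.
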